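(* Let $m,d',h,c$ be positive integers with $h\le d'$, and let $f:\{0,1\}^{L_{d'}}\to\{0,1\}$ be a function whose value is affected by only $m$ of its inputs. Let $f'=f\circ\Phi_{d'}\circ\Phi_{d'-1}\circ\cdots\circ\Phi_{d'-h+1}$ (with the random maps $\Phi_j$ independent). Then with probability at least $1-(m\theta^h)^c$, fewer than $c$ inputs affect the value of $f'$.
   Context: Fix $k\ge2$ and $0\le\theta<1$. $L_r$ is the set of depth-$r$ vertices of the complete $k$-ary tree, and $\mathrm{parent}(v)$ is the parent of $v$. $R_\theta$ is the distribution on $\{0,1,*\}$ giving $0$ and $1$ each probability $(1-\theta)/2$ and $*$ probability $\theta$. For $j\ge1$, $\Phi_j:\{0,1\}^{L_{j-1}}\to\{0,1\}^{L_j}$ is the random map defined by drawing $r\in\{0,1,*\}^{L_j}$ with i.i.d. $R_\theta$ coordinates and setting $(\Phi_j(x))_v=r_v$ if $r_v\in\{0,1\}$ and $(\Phi_j(x))_v=x_{\mathrm{parent}(v)}$ if $r_v=*$. An input affects a function if the function's value depends on it. *)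

From HB Require Import structures.
From mathcomp Require Import all_boot all_order all_algebra.
Set Implicit Arguments. Unset Strict Implicit. Unset Printing Implicit Defensive.
Import Order.TTheory GRing.Theory Num.Theory.

(* Depth-r vertices of the complete k-ary tree: words of length r over 'I_k.
   The root is the empty word; the children of a word w are the words [:: a & w],
   so the parent of a depth-(r+1) vertex is obtained by dropping its head letter. *)
Definition L (k r : nat) : finType := (r.-tuple 'I_k)%type.

Definition parent (k r : nat) (v : L k r.+1) : L k r := behead_tuple v.

(* Symbols {0,1,*}: Some false = 0, Some true = 1, None = *. *)
Definition sym := option bool.

Section Defs.
Variable R : realFieldType.
Local Open Scope ring_scope.

Definition wR (theta : R) (s : sym) : R :=
  if s is Some _ then (1 - theta) / 2%:R else theta.

(* Phi_j for j = r.+1, with randomness rr in {0,1,*}^{L_j}. *)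
Definition Phi (k r : nat) (rr : {ffun L k r.+1 -> sym}) (x : {ffun L k r -> bool})
  : {ffun L k r.+1 -> bool} :=
  [ffun v => if rr v is Some b then b else x (parent v)].

(* Joint sample space of the h independent maps Phi_{n+h}, ..., Phi_{n+1}:
   first component is the randomness of the top map Phi_{n+h}. *)
Fixpoint Rand (k h n : nat) : finType :=
  match h with
  | 0 => unit
  | h'.+1 => ({ffun L k (h' + n).+1 -> sym} * Rand k h' n)%type
  end.

Fixpoint weight (theta : R) (k h n : nat) : Rand k h n -> R :=
  match h with
  | 0 => fun _ => 1
  | h'.+1 => fun rr => (\prod_v wR theta (rr.1 v)) * weight theta rr.2
  end.

(* f' = f o Phi_{n+h} o ... o Phi_{n+1}. *)
Fixpoint pull (k h n : nat) :
  Rand k h n -> ({ffun L k (h + n) -> bool} -> bool) -> ({ffun L k n -> bool} -> bool) :=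
  match h with
  | 0 => fun _ f => f
  | h'.+1 => fun rr f => pull rr.2 (fun x => f (Phi rr.1 x))
  end.

Definition prob (theta : R) (k h n : nat) (E : Rand k h n -> bool) : R :=
  \sum_(rr : Rand k h n) weight theta rr * (E rr)%:R.

End Defs.

Definition flip (T : finType) (x : {ffun T -> bool}) (v : T) : {ffun T -> bool} :=
  [ffun u => if u == v then ~~ x u else x u].

Definition affecting (T : finType) (g : {ffun T -> bool} -> bool) : {set T} :=
  [set v | [exists x, g x != g (flip x v)]].

From HB Require Import structures.
From mathcomp Require Import all_boot all_order all_algebra.
Set Implicit Arguments. Unset Strict Implicit. Unset Printing Implicit Defensive.
Import Order.TTheory GRing.Theory Num.Theory.
Local Open Scope ring_scope.

(* An input u of f o Phi can only affect it through a child v of u that affects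
   f and carries the symbol *, so the inputs affecting one layer are parents of
   the *-labelled inputs affecting the next.  A fixed set of c inputs is entirely
   *-labelled with probability theta^c, hence the expected number E[C(N, c)] of
   c-sets of affecting inputs shrinks by theta^c per layer and is at most
   theta^(hc) C(m, c) <= (m theta^h)^c after h layers.  As C(N, c) >= 1 exactly
   when N >= c, Markov's inequality bounds P(N >= c) by this expectation. *)

Lemma eq_on_affecting (T : finType) (g : {ffun T -> bool} -> bool) (y y' : {ffun T -> bool}) :
  {in affecting g, y =1 y'} -> g y = g y'.
Proof.
move Dn: #|[set v | y v != y' v]| => n; elim: n y Dn => [|n IHn] y Dn eq_yy'.
  congr g; apply/ffunP => v; move/cards0_eq/setP/(_ v): Dn.
  by rewrite !inE => /negbFE/eqP.
have /card_gt0P[v] : (0 < #|[set v | y v != y' v]|)%N by rewrite Dn.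
rewrite inE => yv.
have v_na : v \notin affecting g by apply: contra yv => /eq_yy' ->; rewrite eqxx.
have -> : g y = g (flip y v).
  by move: v_na; rewrite inE => /existsPn/(_ y)/negbNE/eqP.
apply: IHn => [|u u_aff].
  have -> : [set u | flip y v u != y' u] = [set u | y u != y' u] :\ v.
    apply/setP => u; rewrite !inE ffunE.
    by case: (eqVneq u v) => [->|] //=; move: yv; case: (y v); case: (y' v).
  by move: Dn; rewrite (cardsD1 v) inE yv => -[].
rewrite ffunE ifN ?eq_yy' //.
by apply: contraNneq v_na => <-.
Qed.

Definition stars (I : finType) (rr : {ffun I -> sym}) : {set I} := [set i | rr i == None].

Lemma affecting_Phi_sub k r (f : {ffun L k r.+1 -> bool} -> bool) (rr : {ffun L k r.+1 -> sym}) :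
  affecting (fun x => f (Phi rr x)) \subset (@parent k r) @: (affecting f :&: stars rr).
Proof.
apply/subsetP => u; rewrite inE => /existsP[x]; apply: contraNT => u_notin.
apply/eqP/eq_on_affecting => v v_aff; rewrite !ffunE.
case rv: (rr v) => [b|] //; rewrite ifN //.
apply: contraNneq u_notin => <-; apply/imsetP; exists v => //.
by rewrite inE v_aff inE rv.
Qed.

Lemma card_affecting_Phi k r (f : {ffun L k r.+1 -> bool} -> bool) (rr : {ffun L k r.+1 -> sym}) :
  (#|affecting (fun x => f (Phi rr x))| <= #|affecting f :&: stars rr|)%N.
Proof. exact: leq_trans (subset_leq_card (affecting_Phi_sub f rr)) (leq_imset_card _ _). Qed.

Lemma sum_sym (V : nmodType) (F : sym -> V) :
  \sum_s F s = F None + (F (Some true) + F (Some false)).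
Proof.
rewrite (bigD1 None) //= (bigD1 (Some true)) //= (bigD1 (Some false)) //= big1 ?addr0 //.
by case=> [[]|].
Qed.

Lemma natr_subset (R : nzSemiRingType) (I : finType) (U A : {set I}) :
  (U \subset A)%:R = \prod_i ((i \in U) ==> (i \in A))%:R :> R.
Proof.
rewrite -(big_morph (fun b : bool => b%:R : R) (id2 := true) (op2 := andb)) //; last first.
  by case; case; rewrite ?mul1r ?mul0r.
rewrite big_andE; congr (nat_of_bool _)%:R.
by apply/subsetP/forall_inP => [sUA i _|UA i]; apply/implyP; [apply: sUA|apply: UA].
Qed.

Section StarLayer.
Variables (R : realFieldType) (theta : R) (I : finType).

Definition layer_weight (rr : {ffun I -> sym}) : R := \prod_i wR theta (rr i).

Lemma sum_wR : \sum_s wR theta s = 1.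
Proof. by rewrite sum_sym /= -splitr addrC subrK. Qed.

Lemma sum_layer_weight : \sum_rr layer_weight rr = 1.
Proof.
rewrite -(bigA_distr_bigA (fun _ s => wR theta s)) /=.
by rewrite big1 // => i _; apply: sum_wR.
Qed.

Lemma sum_layer_subset_stars (U : {set I}) :
  \sum_rr layer_weight rr * (U \subset stars rr)%:R = theta ^+ #|U|.
Proof.
pose F i s := wR theta s * ((i \in U) ==> (s == None))%:R.
have -> : \sum_rr layer_weight rr * (U \subset stars rr)%:R =
          \sum_(rr : {ffun I -> sym}) \prod_i F i (rr i).
  apply: eq_bigr => rr _; rewrite natr_subset -big_split /=.
  by apply: eq_bigr => i _; rewrite inE.
have F_in i : i \in U -> \sum_s F i s = theta.
  by move=> iU; rewrite sum_sym /F iU /= !mulr0 !addr0 mulr1.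
have F_out i : i \notin U -> \sum_s F i s = 1.
  by move=> iU; rewrite /F (negbTE iU) -[RHS]sum_wR; apply: eq_bigr => s _; rewrite /= mulr1.
rewrite -bigA_distr_bigA (bigID (mem U)) /= (eq_bigr _ F_in) (eq_bigr _ F_out).
by rewrite prodr_const big1_eq mulr1.
Qed.

Lemma sum_layer_bin_stars (S : {set I}) c :
  \sum_rr layer_weight rr * 'C(#|S :&: stars rr|, c)%:R = 'C(#|S|, c)%:R * theta ^+ c.
Proof.
have draws_in (A : {set I}) : 'C(#|S :&: A|, c)%:R =
    \sum_(U : {set I} | (U \subset S) && (#|U| == c)) (U \subset A)%:R :> R.
  rewrite -cards_draws -sum1dep_card natr_sum big_mkcond [RHS]big_mkcond /=.
  apply: eq_bigr => U _; rewrite subsetI.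
  by case: (U \subset S); case: (#|U| == c); case: (U \subset A).
under eq_bigr do rewrite draws_in mulr_sumr.
rewrite exchange_big /= (eq_bigr (fun=> theta ^+ c)) => [|U /andP[_ /eqP <-]]; last first.
  exact: sum_layer_subset_stars.
by rewrite -cards_draws -sum1dep_card natr_sum mulr_suml; apply: eq_bigr => U _; rewrite mul1r.
Qed.

End StarLayer.

Section Weights.
Variables (R : realFieldType) (theta : R) (k : nat).
Hypotheses (theta_ge0 : 0 <= theta) (theta_le1 : theta <= 1).

Lemma wR_ge0 s : 0 <= wR theta s.
Proof. by case: s => //= _; rewrite divr_ge0 ?subr_ge0 ?ler0n. Qed.

Lemma layer_weight_ge0 (I : finType) (rr : {ffun I -> sym}) : 0 <= layer_weight theta rr.
Proof. by apply: prodr_ge0 => i _; apply: wR_ge0. Qed.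

Lemma weight_ge0 h n (rr : Rand k h n) : 0 <= weight theta rr.
Proof.
elim: h n rr => [|h IHh] n rr /=; first exact: ler01.
by rewrite mulr_ge0 ?IHh //; apply: layer_weight_ge0.
Qed.

Lemma sum_Rand0 n (F : Rand k 0 n -> R) : \sum_rr F rr = F tt.
Proof. by rewrite (big_pred1 tt) // => -[]. Qed.

Lemma sum_weightS h n (F : Rand k h.+1 n -> R) :
  \sum_rr weight theta rr * F rr =
  \sum_r1 layer_weight theta r1 * \sum_(r : Rand k h n) weight theta r * F (r1, r).
Proof.
under [RHS]eq_bigr do rewrite mulr_sumr.
rewrite pair_bigA.
by apply: eq_bigr => -[r1 r] _; rewrite mulrA.
Qed.

Lemma weight_sum h n : \sum_(rr : Rand k h n) weight theta rr = 1.
Proof.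
elim: h n => [|h IHh] n; first by rewrite sum_Rand0.
transitivity (\sum_(rr : Rand k h.+1 n) weight theta rr * 1).
  by apply: eq_bigr => rr _; rewrite mulr1.
rewrite sum_weightS -[RHS](sum_layer_weight theta (L k (h + n).+1)).
apply: eq_bigr => r1 _.
by rewrite (eq_bigr _ (fun r _ => mulr1 (weight theta r))) IHh mulr1.
Qed.

Lemma expect_bin_affecting_Phi r (f : {ffun L k r.+1 -> bool} -> bool) c :
  \sum_r1 layer_weight theta r1 * 'C(#|affecting (fun x => f (Phi r1 x))|, c)%:R
    <= theta ^+ c * 'C(#|affecting f|, c)%:R.
Proof.
rewrite mulrC -sum_layer_bin_stars; apply: ler_sum => r1 _.
rewrite ler_wpM2l ?ler_nat ?leq_bin2l ?card_affecting_Phi //.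
exact: layer_weight_ge0.
Qed.

Lemma expect_bin_affecting_pull h n (f : {ffun L k (h + n) -> bool} -> bool) c :
  \sum_rr weight theta rr * 'C(#|affecting (pull rr f)|, c)%:R
    <= theta ^+ (h * c) * 'C(#|affecting f|, c)%:R.
Proof.
elim: h n f => [|h IHh] n f; first by rewrite sum_Rand0 /= !mul1r.
rewrite sum_weightS /=.
apply: le_trans (_ : \sum_r1 layer_weight theta r1 *
  (theta ^+ (h * c) * 'C(#|affecting (fun x => f (Phi r1 x))|, c)%:R) <= _).
  by apply: ler_sum => r1 _; rewrite ler_wpM2l ?IHh //; apply: layer_weight_ge0.
under eq_bigr do rewrite mulrCA.
rewrite -mulr_sumr mulSn exprD [theta ^+ c * _]mulrC -mulrA.
by rewrite ler_wpM2l ?exprn_ge0 ?expect_bin_affecting_Phi.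
Qed.

End Weights.

Lemma bin_le_expn n c : ('C(n, c) <= n ^ c)%N.
Proof.
rewrite (leq_trans (leq_pmulr _ (fact_gt0 c))) // bin_ffact ffact_prod.
have -> : (n ^ c = \prod_(i < c) n)%N by rewrite prod_nat_const card_ord.
by rewrite leq_prod // => i _; rewrite leq_subr.
Qed.

Lemma ler_1Bbin_ltn (R : numDomainType) N c : 1 - 'C(N, c)%:R <= (N < c)%:R :> R.
Proof. by case: ltnP => [_|le_cN]; rewrite ?gerBl ?ler0n // subr_le0 ler1n bin_gt0. Qed.

Theorem mainTheorem14 (R : realFieldType) (k : nat) (theta : R) (m n h c : nat)
  (f : {ffun L k (h + n) -> bool} -> bool) :
  (2 <= k)%N -> 0 <= theta -> theta < 1 ->
  (0 < m)%N -> (0 < h)%N -> (0 < c)%N ->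
  (#|affecting f| <= m)%N ->
  1 - (m%:R * theta ^+ h) ^+ c <=
    prob theta (fun rr : Rand k h n => (#|affecting (pull rr f)| < c)%N).
Proof.
move=> _ theta_ge0 theta_lt1 _ _ _ aff_f_le_m.
have theta_le1 := ltW theta_lt1.
apply: (@le_trans _ _ (1 - \sum_rr weight theta rr * 'C(#|affecting (pull rr f)|, c)%:R)).
  rewrite lerD2l lerN2 (le_trans (expect_bin_affecting_pull theta_ge0 theta_le1 f c)) //.
  rewrite exprMn -exprM [X in _ <= X]mulrC ler_wpM2l ?exprn_ge0 // -natrX ler_nat.
  exact: leq_trans (leq_bin2l c aff_f_le_m) (bin_le_expn m c).
rewrite /prob -[X in X - _](weight_sum theta k h n) -sumrB; apply: ler_sum => rr _.
by rewrite -[X in X - _]mulr1 -mulrBr ler_wpM2l ?ler_1Bbin_ltn //; apply: weight_ge0.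
Qed.
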